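(* For every $n\ge1$, $\mathcal{C}^*(n)\le 1-L(n)$, where $L(n)$ is the optimal value of the following linear program in variables $y_0,\dots,y_{\lfloor n/2\rfloor}\in\mathbb{R}$: minimize $3^ny_0$ subject to $y_j\ge0$ for all $j$, $\sum_{j=0}^{\lfloor n/2\rfloor}K_i(2j)y_j\ge0$ for all $i=0,\dots,n$, and $\sum_{j=0}^{\lfloor n/2\rfloor}3^{n-2j}y_j=1$.
   Context: The concentratable entanglement of an $n$-qubit pure state is $\mathcal{C}(\ket{\psi})=1-\frac{1}{2^{n}}\sum_{\alpha\subseteq [n]}\mathrm{Tr}[\rho_\alpha^2]$ ($\rho_\alpha$ the reduced state on $\alpha$, $\mathrm{Tr}[\rho_\emptyset^2]=1$), and $\mathcal{C}^*(n)=\max_{\ket{\psi}\in(\mathbb{C}^2)^{\otimes n}}\mathcal{C}(\ket{\psi})$. The quaternary Krawtchouk polynomials are $K_w(l)=\sum_{j=0}^{w}\binom{l}{j}\binom{n-l}{w-j}(-1)^j3^{w-j}$ for $w,l\in\{0,\dots,n\}$. *)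

From HB Require Import structures.
From mathcomp Require Import all_boot all_order all_algebra.
From mathcomp Require Import all_classical all_reals.
From mathcomp Require Import complex.
Set Implicit Arguments. Unset Strict Implicit. Unset Printing Implicit Defensive.
Import Order.TTheory GRing.Theory Num.Theory.
Local Open Scope ring_scope.

Section QE.
Variable R : realType.
Local Notation C := (complex R).

(* computational basis configurations of n qubits *)
Definition config (n : nat) := {ffun 'I_n -> bool}.

Definition normalized (n : nat) (psi : {ffun config n -> C}) : Prop :=
  \sum_(x : config n) psi x * conjc (psi x) = 1.

(* a configuration supported on alpha (zero outside alpha): canonical
   representative of a basis state of the subsystem alpha *)
Definition supp_on (n : nat) (alpha : {set 'I_n}) (x : config n) : bool :=
  [forall i, (i \notin alpha) ==> ~~ x i].

Definition glue (n : nat) (alpha : {set 'I_n}) (a c : config n) : config n :=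
  [ffun i => if i \in alpha then a i else c i].

(* reduced density matrix rho_alpha = Tr_{complement alpha} |psi><psi| ,
   entries indexed by basis states a, b of subsystem alpha *)
Definition rdm (n : nat) (alpha : {set 'I_n}) (psi : {ffun config n -> C})
  (a b : config n) : C :=
  \sum_(c : config n | supp_on (~: alpha) c)
     psi (glue alpha a c) * conjc (psi (glue alpha b c)).

Definition purity (n : nat) (alpha : {set 'I_n}) (psi : {ffun config n -> C}) : C :=
  \sum_(a : config n | supp_on alpha a) \sum_(b : config n | supp_on alpha b)
     rdm alpha psi a b * rdm alpha psi b a.

(* concentratable entanglement; Tr[rho_alpha^2] is real, we take its real part *)
Definition conc_ent (n : nat) (psi : {ffun config n -> C}) : R :=
  1 - (2 ^+ n)^-1 * \sum_(alpha : {set 'I_n}) complex.Re (purity alpha psi).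

Definition Cstar (n : nat) : R :=
  sup [set conc_ent psi | psi in [set psi : {ffun config n -> C} | normalized psi]]%classic.

Definition kraw (n w l : nat) : R :=
  \sum_(0 <= j < w.+1) ('C(l, j) * 'C(n - l, w - j))%:R * (-1) ^+ j * 3 ^+ (w - j).

Definition LP_feasible (n : nat) (y : 'I_(n./2.+1) -> R) : Prop :=
  (forall j, 0 <= y j) /\
  (forall i : 'I_n.+1, 0 <= \sum_(j < n./2.+1) kraw n i (2 * j) * y j) /\
  \sum_(j < n./2.+1) 3 ^+ (n - 2 * j) * y j = 1.

Definition LPval (n : nat) : R :=
  inf [set 3 ^+ n * y ord0 | y in [set y : 'I_(n./2.+1) -> R | LP_feasible y]]%classic.

End QE.

(* Write p(g) for the purity Tr[rho_g^2], so that C(psi) = 1 - 2^-n sum_g p(g).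
   Two families of linear combinations of the p(g) are nonnegative for every
   pure state: the Walsh transform sum_g (-1)^|g :&: d| p(g), which is 2^-n
   times a sum of squared moduli of signed sums over g of the amplitudes of
   psi (x) psi with the two copies swapped on g; and the support weights
   sum_(g <= t) (-1)^|t :\: g| 2^|g| p(g), which sum the squared expectations
   of the Pauli operators of support exactly t.  Grouping the Walsh transform
   by |d| (odd sizes vanish since p(~: g) = p(g)) gives a feasible point y of
   the LP with 3^n y_0 = 2^-n sum_g p(g): its Krawtchouk constraints are
   combinations of support weights, and its normalization is
   sum_d Walsh(d) = 2^n p(set0) = 2^n.  Hence LPval <= 1 - C(psi). *)

From HB Require Import structures.
From mathcomp Require Import all_boot all_order all_algebra.
From mathcomp Require Import reals.
From mathcomp Require Import complex.
From mathcomp Require Import ring lra.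
Set Implicit Arguments. Unset Strict Implicit. Unset Printing Implicit Defensive.
Import Order.TTheory GRing.Theory Num.Theory.
Local Open Scope ring_scope.

Section SubsetProducts.
Variables (K : comPzRingType) (n : nat).

Lemma sum_sets_prod (F : 'I_n -> bool -> K) :
  \sum_(A : {set 'I_n}) \prod_k F k (k \in A) = \prod_k (F k false + F k true).
Proof.
under [RHS]eq_bigr do rewrite addrC -big_bool.
rewrite bigA_distr_bigA /= (reindex (fun f : {ffun 'I_n -> bool} => [set k | f k])) /=.
  by apply: eq_bigr => f _; apply: eq_bigr => k _; rewrite inE.
exists (fun A : {set 'I_n} => [ffun k => k \in A]) => [f _ | A _].
  by apply/ffunP => k; rewrite ffunE inE.
by apply/setP => k; rewrite inE ffunE.
Qed.

Lemma expr_card_prod (x : K) (A : {set 'I_n}) :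
  x ^+ #|A| = \prod_k (if k \in A then x else 1).
Proof. by rewrite -big_mkcond prodr_const. Qed.

Lemma natr_subset_prod (A B : {set 'I_n}) :
  (A \subset B)%:R = \prod_k (if (k \in A) && (k \notin B) then 0 else 1 : K).
Proof.
have [/subsetP sAB | /subsetPn [k kA kNB]] := boolP (A \subset B).
  by rewrite big1 // => k _; case: (boolP (k \in A)) => // /sAB ->.
by rewrite (bigD1 k) //= kA kNB mul0r.
Qed.

Lemma sum1_sets : \sum_(A : {set 'I_n}) (1 : K) = 2 ^+ n.
Proof.
transitivity (\prod_(k < n) (1 + 1 : K)); last by rewrite prodr_const card_ord.
rewrite -(sum_sets_prod (fun _ _ => 1)).
by apply: eq_bigr => A _; rewrite big1.
Qed.

Lemma sum_sign_between (s t : {set 'I_n}) :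
    \sum_(g : {set 'I_n} | (s \subset g) && (g \subset t)) (-1) ^+ #|t :\: g|
  = (s == t)%:R :> K.
Proof.
pose F k b := (if (k \in s) && ~~ b then 0 else 1) * (if b && (k \notin t) then 0 else 1) *
  (if ~~ b && (k \in t) then -1 else 1) : K.
rewrite big_mkcond (eq_bigr (fun g : {set 'I_n} => \prod_k F k (k \in g))) => [|g _].
  rewrite sum_sets_prod eqEsubset -mulnb natrM !natr_subset_prod -big_split.
  by apply: eq_bigr => k _; rewrite /F; case: (k \in s); case: (k \in t) => /=; ring.
rewrite -mulrb -(mulr_natl _ (_ && _)) -mulnb natrM !natr_subset_prod expr_card_prod.
rewrite -!big_split; apply: eq_bigr => k _; rewrite !inE /F.
by case: (k \in g); rewrite ?andbT ?andbF.
Qed.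

End SubsetProducts.

Section WalshTransform.
Variables (K : comPzRingType) (n : nat) (p : {set 'I_n} -> K).

Definition walsh (d : {set 'I_n}) : K := \sum_g (-1) ^+ #|g :&: d| * p g.

Definition support_weight (t : {set 'I_n}) : K :=
  \sum_(g : {set 'I_n} | g \subset t) (-1) ^+ #|t :\: g| * 2 ^+ #|g| * p g.

Lemma walsh_set0 : walsh set0 = \sum_g p g.
Proof. by apply: eq_bigr => g _; rewrite setI0 cards0 mul1r. Qed.

Lemma sum_walsh : \sum_d walsh d = 2 ^+ n * p set0.
Proof.
have sum_sign (g : {set 'I_n}) :
    \sum_(d : {set 'I_n}) (-1) ^+ #|g :&: d| = \prod_k (if k \in g then 0 else 2 : K).
  pose F k b := if (k \in g) && b then -1 else 1 : K.
  rewrite (eq_bigr (fun d : {set 'I_n} => \prod_k F k (k \in d))) => [|d _]; last first.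
    by rewrite expr_card_prod; apply: eq_bigr => k _; rewrite inE.
  rewrite sum_sets_prod; apply: eq_bigr => k _.
  by rewrite /F; case: (k \in g); rewrite /= ?subrr.
rewrite exchange_big /=; under eq_bigr do rewrite -mulr_suml sum_sign.
rewrite (bigD1 set0) //= [X in _ + X]big1 ?addr0 => [|g /set0Pn [k kg]].
  by rewrite (eq_bigr (fun=> 2)) ?prodr_const ?card_ord // => k _; rewrite inE.
by rewrite (bigD1 k) //= kg mul0r mul0r.
Qed.

Hypothesis pC : forall g, p (~: g) = p g.

Lemma walsh_sign d : walsh d = (-1) ^+ #|d| * walsh d.
Proof.
rewrite {1}/walsh (reindex_inj (@setC_inj _)) /= mulr_sumr.
apply: eq_bigr => g _; rewrite pC mulrA; congr (_ * _).
rewrite !expr_card_prod -big_split /=; apply: eq_bigr => k _; rewrite !inE.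
by case: (k \in g); case: (k \in d); rewrite /= ?mulN1r ?opprK ?mulr1.
Qed.

(* After substituting [~: g] for [g] on the right, the coefficients of [p g]
   on both sides factor over the coordinates: a coordinate in [e :&: g],
   [e :\: g], [g :\: e] or in neither contributes [6], [0], [-2] or [4]. *)
Lemma sum_walsh_sign3 e :
  \sum_d (-1) ^+ #|e :&: d| * 3 ^+ #|e :\: d| * 3 ^+ #|d| * walsh d
  = 3 ^+ #|e| * 2 ^+ n * support_weight (~: e).
Proof.
rewrite /walsh /support_weight.
under eq_bigr do rewrite mulr_sumr.
rewrite exchange_big /= mulr_sumr [RHS]big_mkcond [RHS](reindex_inj (@setC_inj _)) /=.
apply: eq_bigr => g _; rewrite pC -mulrb -(mulr_natl _ (~: g \subset ~: e)) !mulrA.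
under eq_bigr do rewrite mulrA.
rewrite -mulr_suml; congr (_ * _).
pose F k b := (if (k \in e) && b then -1 else 1) * (if ~~ b && (k \in e) then 3 else 1) *
   (if b then 3 else 1) * (if (k \in g) && b then -1 else 1) : K.
rewrite (eq_bigr (fun d : {set 'I_n} => \prod_k F k (k \in d))) => [|d _]; last first.
  rewrite !expr_card_prod -!big_split; apply: eq_bigr => k _; rewrite !inE.
  by rewrite /F; case: (k \in d); rewrite ?andbT ?andbF.
have -> : 2 ^+ n = \prod_(k < n) 2 :> K by rewrite prodr_const card_ord.
rewrite sum_sets_prod natr_subset_prod !expr_card_prod -!big_split.
apply: eq_bigr => k _; rewrite !inE /F.
by case: (k \in e); case: (k \in g) => /=; ring.
Qed.

End WalshTransform.

Section MorphTransforms.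
Variables (K L : comPzRingType) (f : {rmorphism K -> L}) (n : nat) (p : {set 'I_n} -> K).

Lemma rmorph_walsh d : f (walsh p d) = walsh (f \o p) d.
Proof. by rewrite rmorph_sum; apply: eq_bigr => g _; rewrite rmorphM rmorph_sign. Qed.

Lemma rmorph_support_weight t : f (support_weight p t) = support_weight (f \o p) t.
Proof.
rewrite rmorph_sum; apply: eq_bigr => g _.
by rewrite !rmorphM rmorph_sign rmorphXn rmorph_nat.
Qed.

End MorphTransforms.

Lemma setUI_split (T : finType) (A B d : {set T}) : A \subset d -> B \subset ~: d ->
  (A :|: B) :&: d = A /\ (A :|: B) :&: ~: d = B.
Proof.
move=> sAd sBd.
have AdC : A :&: ~: d = set0 by apply/disjoint_setI0; rewrite -subsets_disjoint.
have Bd : B :&: d = set0 by apply/disjoint_setI0; rewrite -[d]setCK -subsets_disjoint.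
by rewrite !setIUl (setIidPl sAd) (setIidPl sBd) AdC Bd setU0 set0U.
Qed.

Lemma card_sets_meet (T : finType) (d : {set T}) (w j : nat) : (j <= w)%N ->
  #|[set e : {set T} | #|e| == w & #|e :&: d| == j]| = ('C(#|d|, j) * 'C(#|~: d|, w - j))%N.
Proof.
move=> le_jw; pose split e := (e :&: d, e :&: ~: d).
have split_inj : injective split.
  by move=> e e' [de dCe]; rewrite -(setID e d) -(setID e' d) !setDE de dCe.
rewrite -(card_imset _ split_inj) -!cards_draws -cardsX; congr #|pred_of_set _|.
apply/setP => [[A B]]; rewrite !inE /=; apply/imsetP/andP => [[e] | []].
  rewrite inE => /andP [/eqP cew /eqP cedj] [-> ->].
  by rewrite !subsetIr cedj -cew -cedj -(cardsID d e) setDE addKn !eqxx.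
move=> /andP [sAd /eqP cAj] /andP [sBd /eqP cBwj].
have [UAd UBd] := setUI_split sAd sBd; exists (A :|: B); last by rewrite /split UAd UBd.
rewrite inE UAd cAj eqxx andbT -(cardsID d) setDE UAd UBd cAj cBwj.
by rewrite subnKC.
Qed.

Lemma kraw_sum_sets (R : realType) (n w : nat) (d : {set 'I_n}) :
  \sum_(e : {set 'I_n} | #|e| == w) (-1) ^+ #|e :&: d| * 3 ^+ #|e :\: d| = kraw R n w #|d|.
Proof.
pose S (j : nat) := [set e : {set 'I_n} | #|e| == w & #|e :&: d| == j].
transitivity (\sum_(j < w.+1) \sum_(e in S j) ((-1) ^+ j * 3 ^+ (w - j) : R)).
  rewrite (partition_big (fun e : {set 'I_n} => inord #|e :&: d| : 'I_w.+1) predT) //=.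
  apply: eq_bigr => j _.
  have memS (e : {set 'I_n}) : (#|e| == w) && (inord #|e :&: d| == j) = (e \in S j).
    rewrite inE; case: (boolP (#|e| == w)) => //= /eqP ew.
    have le_edw : (#|e :&: d| <= w)%N by rewrite -ew subset_leq_card ?subsetIl.
    by apply/eqP/eqP => [<- | edj]; [rewrite inordK | apply: val_inj; rewrite /= inordK edj].
  rewrite (eq_bigl _ _ memS); apply: eq_bigr => e; rewrite inE => /andP [/eqP ew /eqP edj].
  by rewrite cardsD ew edj.
have cardCd : (n - #|d| = #|~: d|)%N by rewrite [#|~: d|]cardsCs setCK card_ord.
rewrite /kraw big_mkord cardCd; apply: eq_bigr => j _.
by rewrite sumr_const card_sets_meet -1?ltnS // -mulrA mulr_natl.
Qed.

Lemma card_le_ord n (d : {set 'I_n}) : (#|d| <= n)%N.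
Proof. by have := max_card d; rewrite card_ord. Qed.

Section LPPoint.
Variables (R : realType) (n : nat) (p : {set 'I_n} -> R).
Implicit Types d e g t : {set 'I_n}.
Hypothesis pC : forall g, p (~: g) = p g.

Lemma walsh_odd d : odd #|d| -> walsh p d = 0.
Proof.
by move=> odd_d; have := walsh_sign pC d; rewrite -signr_odd odd_d expr1 mulN1r => ?; lra.
Qed.

Definition lp_point (j : 'I_(n./2.+1)) : R :=
  9 ^+ j / 6 ^+ n * \sum_(d : {set 'I_n} | #|d| == (2 * j)%N) walsh p d.

Lemma expr6E : 6 ^+ n = 3 ^+ n * 2 ^+ n :> R.
Proof. by rewrite -exprMn -natrM. Qed.

Lemma expr9E m : 9 ^+ m = 3 ^+ (2 * m) :> R.
Proof. by rewrite exprM expr2 -natrM. Qed.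

Lemma sum_lp_point (f F : nat -> R) :
    (forall k, (k <= n)%N -> ~~ odd k -> f k./2 * 9 ^+ k./2 = F k) ->
  \sum_(j < n./2.+1) f j * lp_point j
  = (6 ^+ n)^-1 * \sum_(d : {set 'I_n}) F #|d| * walsh p d.
Proof.
move=> fF; rewrite (bigID (fun d : {set 'I_n} => odd #|d|)) /=.
rewrite [X in X + _]big1 ?add0r => [|d /walsh_odd ->]; last by rewrite mulr0.
rewrite (partition_big (fun d : {set 'I_n} => inord #|d|./2 : 'I_(n./2.+1)) predT) //=.
rewrite mulr_sumr; apply: eq_bigr => j _.
have memj (d : {set 'I_n}) : ~~ odd #|d| && (inord #|d|./2 == j) = (#|d| == (2 * j)%N).
  have [odd_d | even_d] /= := boolP (odd #|d|).
    by apply/esym/negbTE; apply: contraL odd_d => /eqP ->; rewrite mul2n odd_double.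
  have lt_half : (#|d|./2 < n./2.+1)%N by rewrite ltnS half_leq ?card_le_ord.
  apply/eqP/eqP => [<- | ->]; first by rewrite inordK // mul2n even_halfK.
  by apply: val_inj; rewrite /= mul2n doubleK inordK.
rewrite (eq_bigl _ _ memj) /lp_point !mulr_sumr; apply: eq_bigr => d /eqP cd.
have := fF _ (card_le_ord d); rewrite cd mul2n odd_double doubleK => /(_ isT) <-; ring.
Qed.

Lemma lp_point_ge0 : (forall d, 0 <= walsh p d) -> forall j, 0 <= lp_point j.
Proof. by move=> walsh_ge0 j; rewrite mulr_ge0 ?sumr_ge0 ?divr_ge0 ?exprn_ge0. Qed.

Lemma lp_point_kraw_ge0 : (forall t, 0 <= support_weight p t) ->
  forall i, 0 <= \sum_(j < n./2.+1) kraw R n i (2 * j) * lp_point j.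
Proof.
move=> sw_ge0 i.
rewrite (@sum_lp_point (fun j => kraw R n i (2 * j)) (fun k => kraw R n i k * 3 ^+ k));
  last by move=> k _ even_k; rewrite expr9E mul2n even_halfK.
rewrite mulr_ge0 ?invr_ge0 ?exprn_ge0 //.
under eq_bigr do rewrite -kraw_sum_sets !mulr_suml.
rewrite exchange_big /=; apply: sumr_ge0 => e _.
by rewrite (sum_walsh_sign3 pC) mulr_ge0 ?mulr_ge0 ?exprn_ge0.
Qed.

Lemma lp_point_normalized : p set0 = 1 ->
  \sum_(j < n./2.+1) 3 ^+ (n - 2 * j) * lp_point j = 1.
Proof.
move=> p0.
rewrite (@sum_lp_point (fun j => 3 ^+ (n - 2 * j)) (fun=> 3 ^+ n)); last first.
  by move=> k le_kn even_k; rewrite expr9E -exprD mul2n even_halfK // subnK.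
rewrite -mulr_sumr sum_walsh p0 mulr1 expr6E mulVf //.
by rewrite mulf_neq0 // expf_neq0 // pnatr_eq0.
Qed.

Lemma lp_point_objective : 3 ^+ n * lp_point ord0 = (2 ^+ n)^-1 * \sum_g p g.
Proof.
rewrite /lp_point (big_pred1 set0) => [|d]; last by rewrite /= cards_eq0.
rewrite walsh_set0 expr0 mul1r expr6E invfM mulrA mulrA divff ?mul1r //.
by rewrite expf_neq0 // pnatr_eq0.
Qed.

Lemma LP_feasible_lp_point : p set0 = 1 -> (forall d, 0 <= walsh p d) ->
  (forall t, 0 <= support_weight p t) -> LP_feasible lp_point.
Proof.
move=> p0 walsh_ge0 sw_ge0; split; first exact: lp_point_ge0.
by split; [move=> i; apply: lp_point_kraw_ge0 | apply: lp_point_normalized].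
Qed.

End LPPoint.

Section Glue.
Variable n : nat.
Implicit Types (g : {set 'I_n}) (a b c e x y : config n).

Definition restrict g x : config n := [ffun i => (i \in g) && x i].

Lemma supp_onP g x : reflect (forall i, i \notin g -> x i = false) (supp_on g x).
Proof.
apply: (iffP forallP) => [h i gNi | h i]; first by apply/negbTE; have := h i; rewrite gNi.
by apply/implyP => /h ->.
Qed.

Lemma supp_on_restrict g x : supp_on g (restrict g x).
Proof. by apply/supp_onP => i gNi; rewrite ffunE (negbTE gNi). Qed.

Lemma restrict_glue g a c : supp_on g a -> restrict g (glue g a c) = a.
Proof.
move/supp_onP => sa; apply/ffunP => i; rewrite !ffunE.
by case: (boolP (i \in g)) => // gNi; rewrite sa.
Qed.

Lemma restrictC_glue g a c : supp_on (~: g) c -> restrict (~: g) (glue g a c) = c.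
Proof.
move/supp_onP => sc; apply/ffunP => i; rewrite !ffunE inE.
by case: (boolP (i \in g)) => //= gi; rewrite sc // inE gi.
Qed.

Lemma glue_restrict g x : glue g (restrict g x) (restrict (~: g) x) = x.
Proof. by apply/ffunP => i; rewrite !ffunE inE; case: (i \in g). Qed.

Lemma glue_glue g a b c e : glue g (glue g a b) (glue g c e) = glue g a e.
Proof. by apply/ffunP => i; rewrite !ffunE; case: (i \in g). Qed.

Lemma glue_id g x : glue g x x = x.
Proof. by apply/ffunP => i; rewrite ffunE; case: (i \in g). Qed.

Lemma glue_set0 x y : glue set0 x y = y.
Proof. by apply/ffunP => i; rewrite ffunE inE. Qed.

Lemma glue_setC g x y : glue (~: g) x y = glue g y x.
Proof. by apply/ffunP => i; rewrite !ffunE inE; case: (i \in g). Qed.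

Lemma sum_glue (V : nmodType) g (F : config n -> V) :
  \sum_(a | supp_on g a) \sum_(c | supp_on (~: g) c) F (glue g a c) = \sum_x F x.
Proof.
rewrite pair_big_dep (reindex_onto (fun x => (restrict g x, restrict (~: g) x))
  (fun ac => glue g ac.1 ac.2)) /= => [|[a c] /andP [sa sc]]; last first.
  by rewrite restrict_glue // restrictC_glue.
by apply: eq_big => x; rewrite ?supp_on_restrict glue_restrict ?eqxx.
Qed.

End Glue.

Section Purity.
Variables (R : realType) (n : nat) (psi : {ffun config n -> R[i]}).
Implicit Types (g d t u v : {set 'I_n}) (x y : config n).

Lemma purityE g : purity g psi =
  \sum_x \sum_y psi x * psi y * conjc (psi (glue g y x)) * conjc (psi (glue g x y)).
Proof.
pose F x y := psi x * psi y * conjc (psi (glue g y x)) * conjc (psi (glue g x y)).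
transitivity (\sum_(a | supp_on g a) \sum_(c | supp_on (~: g) c)
  \sum_(b | supp_on g b) \sum_(c' | supp_on (~: g) c') F (glue g a c) (glue g b c')).
  rewrite /purity /rdm; apply: eq_bigr => a _; rewrite exchange_big /=.
  apply: eq_bigr => b _; rewrite mulr_suml; apply: eq_bigr => c _.
  by rewrite mulr_sumr; apply: eq_bigr => c' _; rewrite /F !glue_glue; ring.
by rewrite -(sum_glue g); apply: eq_bigr => a _; apply: eq_bigr => c _; rewrite sum_glue.
Qed.

Lemma purity_set0 : normalized psi -> purity set0 psi = 1.
Proof.
move=> norm_psi; rewrite purityE -[RHS]mulr1 -{1}norm_psi -norm_psi mulr_suml.
apply: eq_bigr => x _; rewrite mulr_sumr; apply: eq_bigr => y _.
by rewrite !glue_set0; ring.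
Qed.

Lemma purity_setC g : purity (~: g) psi = purity g psi.
Proof.
by rewrite !purityE; apply: eq_bigr => x _; apply: eq_bigr => y _; rewrite !glue_setC; ring.
Qed.

Definition swap_on g (z : config n * config n) : config n * config n :=
  (glue g z.2 z.1, glue g z.1 z.2).

Lemma swap_onK g : involutive (swap_on g).
Proof. by move=> [x y]; rewrite /swap_on /= !glue_glue !glue_id. Qed.

Definition symdiff g d : {set 'I_n} := [set k | (k \in g) (+) (k \in d)].

Lemma symdiffK g : involutive (symdiff g).
Proof. by move=> d; apply/setP => k; rewrite !inE; case: (k \in g); case: (k \in d). Qed.

Lemma swap_on_symdiff g d z : swap_on d (swap_on g z) = swap_on (symdiff g d) z.
Proof.
by case: z => x y; congr (_, _); apply/ffunP => i; rewrite !ffunE !inE;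
  case: (i \in g); case: (i \in d).
Qed.

Definition amp2 (z : config n * config n) : R[i] := psi z.1 * psi z.2.

Lemma purity_swap g : purity g psi = \sum_z amp2 z * conjc (amp2 (swap_on g z)).
Proof.
rewrite purityE pair_big /=; apply: eq_bigr => [[x y]] _.
by rewrite /amp2 /= rmorphM /=; ring.
Qed.

Lemma purity_real g : purity g psi = (complex.Re (purity g psi))%:C%C.
Proof.
have conj_purity : conjc (purity g psi) = purity g psi.
  rewrite purity_swap rmorph_sum (reindex_inj (can_inj (swap_onK g))) /=.
  by apply: eq_bigr => z _; rewrite swap_onK rmorphM /= conjcK mulrC.
by rewrite ReJ_add conj_purity; field.
Qed.

Definition walsh_amp d (z : config n * config n) : R[i] :=
  \sum_g (-1) ^+ #|g :&: d| * amp2 (swap_on g z).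

(* Expanding the squares, the double sum over [g] and [e] collapses along
   [e := symdiff g e]: the signs are characters of the group of subsets under
   [symdiff], and [swap_on] is an action of that group. *)
Lemma walsh_purity d :
  2 ^+ n * walsh (fun g => purity g psi) d = \sum_z walsh_amp d z * conjc (walsh_amp d z).
Proof.
have sign_symdiff g e :
    (-1) ^+ #|symdiff g e :&: d| = (-1) ^+ #|g :&: d| * (-1) ^+ #|e :&: d| :> R[i].
  rewrite !expr_card_prod -big_split; apply: eq_bigr => k _; rewrite !inE.
  by case: (k \in g); case: (k \in e); case: (k \in d); rewrite /= ?mulN1r ?opprK ?mulr1 ?mul1r.
symmetry; transitivity (\sum_g \sum_e (-1) ^+ #|g :&: d| * (-1) ^+ #|e :&: d| *
    purity (symdiff g e) psi).
  rewrite /walsh_amp; under eq_bigr do rewrite rmorph_sum mulr_suml.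
  rewrite exchange_big; apply: eq_bigr => g _ /=.
  under eq_bigr do rewrite mulr_sumr.
  rewrite exchange_big; apply: eq_bigr => e _ /=.
  rewrite purity_swap mulr_sumr (reindex_inj (can_inj (swap_onK g))) /=.
  apply: eq_bigr => z _; rewrite swap_onK swap_on_symdiff rmorphM rmorph_sign /=; ring.
rewrite -sum1_sets mulr_suml; apply: eq_bigr => g _.
rewrite mul1r (reindex_inj (can_inj (symdiffK g))) /=; apply: eq_bigr => e _.
by rewrite symdiffK sign_symdiff mulrA -expr2 sqrr_sign mul1r.
Qed.

Definition xflip u x : config n := [ffun i => x i (+) (i \in u)].

Lemma xflipK u : involutive (xflip u).
Proof. by move=> x; apply/ffunP => i; rewrite !ffunE; case: (x i); case: (i \in u). Qed.

Definition zsign v x : R[i] := (-1) ^+ #|[set i in v | x i]|.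

(* The expectation <psi| X^u Z^v |psi> of a Pauli operator. *)
Definition pauli_ev u v : R[i] := \sum_x conjc (psi (xflip u x)) * psi x * zsign v x.

Definition agree g x y : bool := [forall k in g, x k == y k].

Lemma sum_zsign g x y :
  \sum_(v : {set 'I_n} | v \subset g) zsign v x * zsign v y = (agree g x y)%:R * 2 ^+ #|g|.
Proof.
pose F k b := (if b && (k \notin g) then 0 else 1) * (if b && x k then -1 else 1) *
  (if b && y k then -1 else 1) : R[i].
transitivity (\sum_(v : {set 'I_n}) \prod_k F k (k \in v)).
  rewrite big_mkcond; apply: eq_bigr => v _.
  rewrite -mulrb -(mulr_natl _ (v \subset g)) natr_subset_prod /zsign !expr_card_prod.
  by rewrite -!big_split; apply: eq_bigr => k _; rewrite !inE /F /= mulrA.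
rewrite sum_sets_prod /F; have [agr | /forallPn [k]] := boolP (agree g x y).
  rewrite mulr1n mul1r expr_card_prod; apply: eq_bigr => k _.
  case: (boolP (k \in g)) => gk /=; last by ring.
  by have /implyP/(_ gk)/eqP -> := forallP agr k; case: (y k) => /=; ring.
rewrite negb_imply => /andP [gk neq_xy]; rewrite mulr0n mul0r (bigD1 k) //= gk /=.
by move: neq_xy; case: (x k); case: (y k) => //= _; rewrite ?mulrN1 ?mulr1 subrr mul0r.
Qed.

Lemma sum_pauli_ev_sqr_Z g u :
  \sum_(v : {set 'I_n} | v \subset g) pauli_ev u v * conjc (pauli_ev u v) =
  2 ^+ #|g| * \sum_x \sum_y (agree g x y)%:R *
     (conjc (psi (xflip u x)) * psi x * psi (xflip u y) * conjc (psi y)).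
Proof.
transitivity (\sum_(v : {set 'I_n} | v \subset g) \sum_x \sum_y
    (conjc (psi (xflip u x)) * psi x * psi (xflip u y) * conjc (psi y)) *
    (zsign v x * zsign v y)).
  apply: eq_bigr => v _; rewrite /pauli_ev rmorph_sum mulr_suml; apply: eq_bigr => x _.
  rewrite mulr_sumr; apply: eq_bigr => y _.
  by rewrite !rmorphM /= conjcK /zsign rmorph_sign; ring.
rewrite exchange_big mulr_sumr; apply: eq_bigr => x _ /=.
rewrite exchange_big mulr_sumr; apply: eq_bigr => y _ /=.
by rewrite -mulr_sumr sum_zsign; ring.
Qed.

Definition diffset g x y : {set 'I_n} := [set i in g | x i != y i].

Lemma agree_xflipE g u x y :
  (u \subset g) && agree g x (xflip u y) = (u == diffset g x y).
Proof.
apply/idP/eqP => [/andP [/subsetP ug /forallP agr] | ->].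
  apply/setP => i; rewrite !inE; move: (agr i) (ug i); rewrite !ffunE.
  by case: (i \in u); case: (i \in g); case: (x i); case: (y i) => //= _ /(_ isT).
apply/andP; split; first by apply/subsetP => i; rewrite inE => /andP [].
apply/forallP => i; apply/implyP => gi; rewrite !ffunE !inE gi /=.
by case: (x i); case: (y i).
Qed.

Lemma xflip_diffsetl g x y : xflip (diffset g x y) x = glue g y x.
Proof. by apply/ffunP => i; rewrite !ffunE !inE; case: (i \in g); case: (x i); case: (y i). Qed.

Lemma xflip_diffsetr g x y : xflip (diffset g x y) y = glue g x y.
Proof. by apply/ffunP => i; rewrite !ffunE !inE; case: (i \in g); case: (x i); case: (y i). Qed.

Lemma sum_agree_xflip g x :
  \sum_(u : {set 'I_n} | u \subset g) \sum_y (agree g x y)%:R *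
     (conjc (psi (xflip u x)) * psi x * psi (xflip u y) * conjc (psi y)) =
  \sum_y psi x * psi y * conjc (psi (glue g y x)) * conjc (psi (glue g x y)).
Proof.
transitivity (\sum_(u : {set 'I_n} | u \subset g) \sum_y (agree g x (xflip u y))%:R *
     (conjc (psi (xflip u x)) * psi x * psi y * conjc (psi (xflip u y)))).
  apply: eq_bigr => u _; rewrite (reindex_inj (can_inj (xflipK u))) /=.
  by apply: eq_bigr => y _; rewrite xflipK.
rewrite exchange_big /=; apply: eq_bigr => y _.
rewrite big_mkcond (bigD1 (diffset g x y)) //= big1 ?addr0 => [|u neq_u].
  have /andP [-> ->] : (diffset g x y \subset g) && agree g x (xflip (diffset g x y) y).
    by rewrite agree_xflipE.
  by rewrite xflip_diffsetl xflip_diffsetr mul1r; ring.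
have := agree_xflipE g u x y; rewrite (negbTE neq_u).
by case: (u \subset g) => //= ->; rewrite mul0r.
Qed.

Lemma sum_pauli_ev_sqr g :
    \sum_(u : {set 'I_n} | u \subset g) \sum_(v : {set 'I_n} | v \subset g)
      pauli_ev u v * conjc (pauli_ev u v)
  = 2 ^+ #|g| * purity g psi.
Proof.
under eq_bigr do rewrite sum_pauli_ev_sqr_Z.
rewrite -mulr_sumr purityE; congr (_ * _).
by rewrite exchange_big /=; apply: eq_bigr => x _; rewrite -sum_agree_xflip.
Qed.

Lemma support_weight_purity t : support_weight (fun g => purity g psi) t =
  \sum_u \sum_(v | u :|: v == t) pauli_ev u v * conjc (pauli_ev u v).
Proof.
pose q u v := pauli_ev u v * conjc (pauli_ev u v).
transitivity (\sum_(g : {set 'I_n}) \sum_u \sum_v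
    if (u :|: v \subset g) && (g \subset t) then (-1) ^+ #|t :\: g| * q u v else 0).
  rewrite /support_weight big_mkcond; apply: eq_bigr => g _.
  rewrite -mulrA -sum_pauli_ev_sqr.
  case: (g \subset t); last by rewrite big1 // => u _; rewrite big1 // => v _; rewrite andbF.
  rewrite mulr_sumr big_mkcond; apply: eq_bigr => u _.
  have [ug | uNg] /= := boolP (u \subset g); last first.
    by rewrite big1 // => v _; rewrite subUset (negbTE uNg).
  rewrite mulr_sumr big_mkcond; apply: eq_bigr => v _.
  by rewrite subUset ug andbT; case: (v \subset g).
rewrite exchange_big; apply: eq_bigr => u _; rewrite exchange_big [RHS]big_mkcond.
apply: eq_bigr => v _; rewrite -big_mkcond -mulr_suml sum_sign_between.
by case: (u :|: v == t); rewrite ?mul1r ?mul0r.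
Qed.

Lemma walsh_Re_purity_ge0 d : 0 <= walsh (fun g => complex.Re (purity g psi)) d.
Proof.
rewrite -ler0c rmorph_walsh /walsh; under eq_bigr do rewrite /= -purity_real.
rewrite -(pmulr_rge0 _ (exprn_gt0 n (ltr0n _ 2))) walsh_purity.
by apply: sumr_ge0 => z _; apply: mulcJ_ge0.
Qed.

Lemma support_weight_Re_purity_ge0 t :
  0 <= support_weight (fun g => complex.Re (purity g psi)) t.
Proof.
rewrite -ler0c rmorph_support_weight /support_weight.
under eq_bigr do rewrite /= -purity_real.
rewrite -/(support_weight _ t) support_weight_purity.
by apply: sumr_ge0 => u _; apply: sumr_ge0 => v _; apply: mulcJ_ge0.
Qed.

End Purity.

Lemma LPval_le (R : realType) n (y : 'I_(n./2.+1) -> R) :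
  LP_feasible y -> LPval R n <= 3 ^+ n * y ord0.
Proof.
move=> feas_y; apply: ge_inf; last by exists y.
by exists 0 => _ [z [z_ge0 _] <-]; rewrite mulr_ge0 ?exprn_ge0.
Qed.

Lemma conc_ent_le (R : realType) n (psi : {ffun config n -> R[i]}) :
  normalized psi -> conc_ent psi <= 1 - LPval R n.
Proof.
move=> norm_psi; pose p g := complex.Re (purity g psi).
have pC g : p (~: g) = p g by rewrite /p purity_setC.
have p0 : p set0 = 1 by rewrite /p purity_set0.
have := LPval_le (LP_feasible_lp_point pC p0 (walsh_Re_purity_ge0 psi)
  (support_weight_Re_purity_ge0 psi)).
by rewrite lp_point_objective // /conc_ent lerD2l lerN2.
Qed.

Definition basis_state (R : realType) n (x0 : config n) : {ffun config n -> R[i]} :=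
  [ffun x => (x == x0)%:R].

Lemma normalized_basis_state (R : realType) n (x0 : config n) :
  normalized (basis_state R x0).
Proof.
rewrite /normalized (bigD1 x0) //= big1 ?addr0 => [|x neq_x].
  by rewrite ffunE eqxx mul1r conjc1.
by rewrite ffunE (negbTE neq_x) mul0r.
Qed.

Theorem mainTheorem11 (R : realType) (n : nat) (hn : (1 <= n)%N) :
  Cstar R n <= 1 - LPval R n.
Proof.
pose psi0 := basis_state R ([ffun=> false] : config n).
apply: ge_sup => [|_ [psi norm_psi <-]]; last exact: conc_ent_le.
by exists (conc_ent psi0), psi0; first exact: normalized_basis_state.
Qed.
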